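(* Let $G$ be a 2-connected graph on $n\ge 4$ vertices, and let $p$ be the length of a longest path in $G$. Then there is a bond of $G$ meeting every path of $G$ of length at least $p-1$.
   Context: All graphs are finite, simple and undirected. The length of a path is its number of edges. A bond of $G$ is a minimal nonempty edge-cut, where an edge-cut is a set of edges of the form $\{xy\in E(G): x\in X, y\in V(G)\setminus X\}$ for some $X\subseteq V(G)$. A set of edges meets a path if the path contains at least one edge of the set. *)

From mathcomp Require Import all_boot.
Set Implicit Arguments. Unset Strict Implicit. Unset Printing Implicit Defensive.

(* A finite simple graph: vertex type T : finType, adjacency e : rel T
   (assumed symmetric and irreflexive in the theorem).
   Edges are represented as 2-element vertex sets {x, y}. *)

Section Graph.
Variables (T : finType) (e : rel T).

Definition del_rel (v : T) : rel T := [rel a b | [&& e a b, a != v & b != v]].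

Definition connected_graph : Prop := forall x y : T, connect e x y.

Definition two_connected : Prop :=
  2 < #|T| /\ connected_graph /\
  forall v x y : T, x != v -> y != v -> connect (del_rel v) x y.

Definition edge_cut (X : {set T}) : {set {set T}} :=
  [set [set x; y] | x in X, y in ~: X & e x y].

Definition is_edge_cut (F : {set {set T}}) : Prop := exists X, F = edge_cut X.

Definition is_bond (F : {set {set T}}) : Prop :=
  is_edge_cut F /\ F != set0 /\
  forall F', is_edge_cut F' -> F' != set0 -> F' \subset F -> F' = F.

Definition is_gpath (s : seq T) : bool :=
  if s is x :: p then path e x p && uniq s else false.

Definition plen (s : seq T) : nat := (size s).-1.

Definition path_edges (s : seq T) : seq {set T} :=
  [seq [set ab.1; ab.2] | ab <- zip s (behead s)].

Definition meets (F : {set {set T}}) (s : seq T) : bool :=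
  has (fun f => f \in F) (path_edges s).

Definition longest_path_length (p : nat) : Prop :=
  (exists s, is_gpath s /\ plen s = p) /\
  (forall s, is_gpath s -> plen s <= p).

End Graph.

From mathcomp Require Import all_boot zify.
From Stdlib Require Import Classical.
Set Implicit Arguments. Unset Strict Implicit. Unset Printing Implicit Defensive.

(* We look for a set A of vertices such that A and its complement are nonempty and induce
   connected subgraphs, so that the edge cut of A is a bond, and such that neither side
   contains a path of length at least p - 1, so that every such path crosses the cut.
   Starting from all vertices but one, we move to the other side, one at a time, a vertex u
   of A that has a neighbour outside A and whose removal leaves A connected, as long as A
   contains a path Q of length at least p - 1.  The complement never acquires such a path:
   a long path R there would pass through u, and by 2-connectivity Q and R are joined by
   connecting paths; recombining pieces of Q, R and the connecting paths then always yields
   some path longer than p. *)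

Section SeqLemmas.
Variable T : eqType.

Lemma split_mem (s : seq T) x : x \in s -> exists s1 s2, s = s1 ++ x :: s2.
Proof. by case/splitPr => s1 s2; exists s1, s2. Qed.

Lemma split_mem2 (s : seq T) a b : a \in s -> b \in s -> a != b ->
  exists s1 s2 s3, s = s1 ++ a :: s2 ++ b :: s3 \/ s = s1 ++ b :: s2 ++ a :: s3.
Proof.
case/splitPr => s1 s2; rewrite mem_cat inE => /orP[bs1|/orP[/eqP->|bs2]] ab.
- by case/splitPr: bs1 => t1 t2; exists t1, t2, s2; right; rewrite -catA.
- by rewrite eqxx in ab.
- by case/splitPr: bs2 => t1 t2; exists s1, t1, t2; left.
Qed.

Lemma mem_nonempty (s : seq T) : s != [::] -> exists x, x \in s.
Proof. by case: s => // x s _; exists x; rewrite mem_head. Qed.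

Lemma uniq_glue (q1 q2 r1 r2 : seq T) u : uniq (q1 ++ u :: q2) -> uniq (r1 ++ u :: r2) ->
  (forall v, v \in q1 ++ q2 -> v \in r1 ++ r2 -> False) -> uniq (q1 ++ u :: q2 ++ r1 ++ r2).
Proof.
have E a b : uniq (a ++ u :: b) = uniq (u :: a ++ b) by rewrite -(cat1s u b) uniq_catCA.
rewrite !E catA /= => /andP[uq Uq] /andP[ur Ur] qr.
rewrite mem_cat negb_or uq ur cat_uniq Uq Ur /= andbT.
by apply/hasPn => v vr; apply/negP => vq; apply: qr vq vr.
Qed.

Lemma uniq_count_le (s t : seq T) :
  uniq t -> (forall z, count_mem z s <= count_mem z t) -> uniq s.
Proof.
move=> Ut le_st; apply: count_mem_uniq => z; have := le_st z.
rewrite (count_uniq_mem z Ut); case: (boolP (z \in s)) => [zs|/count_memPn -> //].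
have : count_mem z s != 0 by apply/eqP => /count_memPn; rewrite zs.
by case: (z \in t) => /=; lia.
Qed.

End SeqLemmas.

Section Connectors.
Variables (T : finType) (r : rel T).

Lemma connect_cross (A : {set T}) x z : connect r x z -> x \in A -> z \notin A ->
  exists a b, [/\ a \in A, b \notin A & r a b].
Proof.
case/connectP=> s; elim: s x => [|y s IH] x /=; first by move=> _ -> ->.
case/andP=> rxy Ps Ez xA zA; case: (boolP (y \in A)) => yA; first exact: IH Ps Ez yA zA.
by exists x, y.
Qed.

Lemma connect_connector (X Z : pred T) x0 z0 :
  connect r x0 z0 -> X x0 -> Z z0 -> (forall v, X v -> ~~ Z v) ->
  exists x k z, [/\ X x, Z z, path r x (rcons k z), uniq k
                  & {in k, forall v, ~~ X v && ~~ Z v}].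
Proof.
move=> /connectP[s Ps Ez] Xx0 Zz0 XZ.
suff [x [k [z [Xx Zz Pk k_out]]]] : exists x k z,
    [/\ X x, Z z, path r x (rcons k z) & {in k, forall v, ~~ X v && ~~ Z v}].
  have := last_rcons x k z; case: (shortenP Pk) => s' Ps' Us' sub_s'.
  case/lastP: s' Ps' Us' sub_s' => [|k' z'] Ps' Us' sub_s' /=.
    by move=> Exz; move: (XZ x Xx); rewrite Exz Zz.
  rewrite last_rcons => Elast; subst z'; move: Us'; rewrite /= rcons_uniq => /and3P[_ zk' Uk'].
  exists x, k', z; split=> // v vk'.
  have : v \in rcons k z by apply: sub_s'; rewrite mem_rcons inE vk' orbT.
  rewrite mem_rcons inE => /orP[/eqP vz|]; last exact: k_out.
  by move: zk'; rewrite -vz vk'.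
case/lastP: s Ps Ez => [|k z] Ps; first by move=> /= Ez; move: (XZ x0 Xx0); rewrite -Ez Zz0.
rewrite last_rcons => Ez; subst z0.
have [n] := ubnP (size k); elim: n x0 k z Xx0 Zz0 Ps => // n IH x k z Xx Zz Pk szk.
case: (boolP (has (fun v => X v || Z v) k)) => [/hasP[v vk XZv]|/hasPn k_out]; last first.
  by exists x, k, z; split=> // v /k_out; rewrite negb_or.
case/splitPr: vk Pk szk => k1 k2; rewrite rcons_cat /= -cat_rcons cat_path last_rcons.
rewrite size_cat /= => /andP[Pk1 Pk2] szk.
case/orP: XZv => [Xv|Zv]; first by apply: (IH v k2 z) => //; lia.
by apply: (IH x k1 v) => //; lia.
Qed.

End Connectors.

Section Walks.
Variables (T : finType) (e : rel T).

Definition walk (s : seq T) : bool := if s is x :: s' then path e x s' else true.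

Lemma gpathE s : is_gpath e s = [&& s != [::], walk s & uniq s].
Proof. by case: s. Qed.

Lemma walk_catE a x b : walk (a ++ x :: b) = walk (rcons a x) && walk (x :: b).
Proof. by case: a => [|y a] //=; rewrite -cat_rcons cat_path last_rcons. Qed.

Lemma walk_cons_catE x a y b :
  walk (x :: a ++ y :: b) = walk (x :: rcons a y) && walk (y :: b).
Proof. exact: (walk_catE (x :: a)). Qed.

Lemma walk_cons2E x y s : walk [:: x, y & s] = e x y && walk (y :: s).
Proof. by []. Qed.

Hypothesis esym : symmetric e.

Lemma walk_rev s : walk (rev s) = walk s.
Proof.
suff W t : walk t -> walk (rev t) by apply/idP/idP => /W //; rewrite revK.
case: t => [|x t] //=; rewrite (lastI x t) rev_rcons /= rev_path.
by rewrite (eq_path (e' := e)) // => a b; rewrite esym.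
Qed.

Lemma walk_rcons_rev a x : walk (rcons (rev a) x) = walk (x :: a).
Proof. by rewrite -walk_rev rev_rcons revK. Qed.

Lemma walk_cons_rev x a : walk (x :: rev a) = walk (rcons a x).
Proof. by rewrite -walk_rev rev_cons revK. Qed.

Lemma walk_cons_rcons_rev x a y : walk (x :: rcons (rev a) y) = walk (y :: rcons a x).
Proof. by rewrite -walk_rev rev_cons rev_rcons revK. Qed.

Lemma walk_rev_around a x b : walk (a ++ x :: b) -> walk (rev b ++ x :: rev a).
Proof. by rewrite !walk_catE walk_rcons_rev walk_cons_rev andbC. Qed.

End Walks.

(* [split_walks] cuts every walk, in the context and in the goal, at each vertex written
   explicitly in it; [walk_auto] then matches the resulting pieces, up to reversal. *)
Ltac split_walks :=
  repeat match goal with H : is_true (walk _ ?s) |- _ =>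
    match s with
    | context [rcons (_ ++ _) _] => rewrite rcons_cat in H
    | context [rcons (_ :: _) _] => rewrite rcons_cons in H
    | context [(_ ++ _) ++ _] => rewrite -catA in H
    | context [(_ :: _) ++ _] => rewrite cat_cons in H
    | context [[::] ++ _] => rewrite cat0s in H
    end end;
  rewrite ?rcons_cat ?rcons_cons -?catA ?cat_cons ?cat0s;
  repeat match goal with
  | H : is_true (walk _ (_ ++ _ :: _)) |- _ =>
      let H1 := fresh "W" in let H2 := fresh "W" in
      rewrite walk_catE in H; case/andP: H => H1 H2
  | H : is_true (walk _ (_ :: _ ++ _ :: _)) |- _ =>
      let H1 := fresh "W" in let H2 := fresh "W" in
      rewrite walk_cons_catE in H; case/andP: H => H1 H2
  | H : is_true (walk _ [:: _, _ & _]) |- _ =>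
      let H1 := fresh "W" in let H2 := fresh "W" in
      rewrite walk_cons2E in H; case/andP: H => H1 H2
  end;
  repeat (first [rewrite walk_catE | rewrite walk_cons_catE | rewrite walk_cons2E]).

Ltac walk_auto esym :=
  split_walks;
  repeat match goal with H : is_true (walk _ ?s) |- _ =>
    match s with context [rev _] =>
      rewrite ?(walk_cons_rcons_rev esym) ?(walk_rcons_rev esym) ?(walk_cons_rev esym)
              ?(walk_rev esym) in H end end;
  rewrite ?(walk_cons_rcons_rev esym) ?(walk_rcons_rev esym) ?(walk_cons_rev esym)
          ?(walk_rev esym);
  repeat match goal with H : is_true ?a |- context [?a] => rewrite H end;
  by rewrite ?andbT.

Ltac count_dominated :=
  move=> ?; rewrite -?cats1;
  repeat (first [rewrite count_cat | rewrite count_rev | progress simpl]);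
  repeat match goal with |- context [nat_of_bool ?b] => generalize (nat_of_bool b) => ? end;
  repeat match goal with H : _ |- _ => clear H end;
  lia.

(* [lia] is slow on the large boolean contexts of path surgery, hence the clearing. *)
Ltac size_lia :=
  repeat match goal with
  | H : is_true ?b |- _ => lazymatch b with leq _ _ => fail | _ => clear H end
  | H : forall _, _ |- _ => clear H
  end;
  repeat match goal with
  | H : context [size (_ ++ _)] |- _ => rewrite size_cat in H
  | H : context [size (rev _)] |- _ => rewrite size_rev in H
  | H : context [size (_ :: _)] |- _ => rewrite [size (_ :: _)]/= in H
  | H : context [size [::]] |- _ => rewrite [size [::]]/= in H
  end;
  lia.

Lemma exists_notin (T : finType) (s : seq T) : size s < #|T| -> exists w, w \notin s.
Proof.
move=> lt_sT; case: (pickP [pred w | w \notin s]) => [w ws|all_s]; first by exists w.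
have : #|T| <= size s.
  apply: leq_trans (card_size s); apply: subset_leq_card; apply/subsetP => w _.
  by move: (all_s w) => /= /negbFE.
lia.
Qed.

Section Graph.
Variables (T : finType) (e : rel T).
Hypotheses (esym : symmetric e) (eirr : irreflexive e).

Definition induced (S : {set T}) : rel T := [rel x y | [&& e x y, x \in S & y \in S]].

Definition connected_in (S : {set T}) : Prop :=
  {in S &, forall x y, connect (induced S) x y}.

Lemma inducedE S x y : induced S x y = [&& e x y, x \in S & y \in S].
Proof. by []. Qed.

Lemma induced_sym S : symmetric (induced S).
Proof. by move=> x y; rewrite !inducedE esym; do 2 case: (_ \in S); rewrite ?andbF. Qed.

Lemma induced_path S x s : path (induced S) x s -> path e x s /\ {subset s <= S}.
Proof.
elim: s x => //= y s IH x /andP[/and3P[exy _ yS] /IH[Ps sS]]; rewrite exy Ps.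
by split=> // z; rewrite inE => /orP[/eqP-> //|/sS].
Qed.

Lemma connect_induced_mono (S1 S2 : {set T}) x y :
  S1 \subset S2 -> connect (induced S1) x y -> connect (induced S2) x y.
Proof.
move=> /subsetP S12; apply: connect_sub => a b /and3P[eab aS bS].
by apply: connect1; rewrite inducedE eab !S12.
Qed.

Lemma induced_cross (S A : {set T}) x z : connect (induced S) x z -> x \in A -> z \notin A ->
  exists a b, [/\ a \in A, b \notin A, a \in S, b \in S & e a b].
Proof.
move=> cxz xA zA; have [a [b [aA bA /and3P[eab aS bS]]]] := connect_cross cxz xA zA.
by exists a, b.
Qed.

(* The interior of the connector lies in [S] but outside [X] and [Z], hence outside [t]. *)
Lemma induced_connector (S : {set T}) (X Z : pred T) (t : seq T) x0 z0 :
  connect (induced S) x0 z0 -> X x0 -> Z z0 -> (forall v, X v -> ~~ Z v) ->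
  {in S, forall v, v \in t -> X v || Z v} -> uniq t ->
  exists x k z, [/\ X x, Z z, walk e (x :: rcons k z) & uniq (k ++ t)].
Proof.
move=> cxz Xx0 Zz0 XZ tXZ Ut.
have [x [k [z [Xx Zz Pk Uk k_out]]]] := connect_connector cxz Xx0 Zz0 XZ.
have [Wk kS] := induced_path Pk; exists x, k, z; split=> //.
rewrite cat_uniq Uk Ut andbT /=; apply/hasPn => v vt; apply/negP => vk.
have vS : v \in S by apply: kS; rewrite mem_rcons inE vk orbT.
by have := tXZ v vS vt; have := k_out v vk; case: (X v); case: (Z v).
Qed.

Lemma connect_induced_avoid (S : {set T}) a b c : a != b -> b != c ->
  connect (induced S) a c ->
  connect (induced (S :\ b)) a c \/ connect (induced (S :\ c)) a b.
Proof.
move=> ab bc; case: (eqVneq a c) => [<- _|ac]; first by left.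
case/connectP=> s; elim: s a ab ac => [|y s IH] a ab ac /=.
  by move=> _ Ec; rewrite Ec eqxx in ac.
case/andP=> /and3P[eay aS yS] Ps Ec.
case: (eqVneq y c) => [Eyc|yc].
  by left; subst y; apply: connect1; rewrite inducedE eay !inE ab aS eq_sym bc.
case: (eqVneq y b) => [Eyb|yb].
  by right; subst y; apply: connect1; rewrite inducedE eay !inE ac aS bc.
have [cyc|cyb] := IH y yb yc Ps Ec;
  [left; apply: connect_trans _ cyc | right; apply: connect_trans _ cyb];
  by apply: connect1; rewrite inducedE eay !inE ?ab ?ac aS ?yb ?yc yS.
Qed.

Lemma connected_in_setU1 (S : {set T}) u w :
  connected_in S -> w \in S -> e u w -> connected_in (u |: S).
Proof.
move=> cS wS euw.
have to_w x : x \in u |: S -> connect (induced (u |: S)) x w.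
  case/setU1P=> [->|xS]; first by apply: connect1; rewrite inducedE euw !inE eqxx wS orbT.
  by apply: connect_induced_mono (cS x w xS wS); apply/subsetP => v vS; rewrite !inE vS orbT.
move=> x y xS yS; apply: connect_trans (to_w x xS) _.
by rewrite (sym_connect_sym (induced_sym _)); apply: to_w.
Qed.

Lemma mem_edge_cut (X : {set T}) f : f \in edge_cut e X ->
  exists x y, [/\ e x y, f = [set x; y] & (x \in X) != (y \in X)].
Proof.
case/imset2P=> x y xX; rewrite !inE => /andP[yX exy] ->.
by exists x, y; rewrite xX (negPf yX).
Qed.

Lemma edge_cut_edge (X : {set T}) x y :
  e x y -> ([set x; y] \in edge_cut e X) = ((x \in X) != (y \in X)).
Proof.
move=> exy; apply/idP/idP => [/mem_edge_cut[a [b [eab E abX]]]|xyX].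
  have xab : x \in [set a; b] by rewrite -E set21.
  have yab : y \in [set a; b] by rewrite -E set22.
  move: xab yab exy abX; rewrite !inE.
  by case/orP=> /eqP-> /orP[]/eqP->; rewrite ?eirr // eq_sym.
case: (boolP (x \in X)) xyX => xX /= yX.
  by apply/imset2P; exists x y => //; rewrite !inE yX exy.
apply/imset2P; exists y x; [by move: yX; case: (y \in X) | by rewrite !inE xX esym exy |].
by rewrite setUC.
Qed.

Lemma eq_edge_cut (X Y : {set T}) :
  (forall x y, e x y -> ((x \in X) != (y \in X)) = ((x \in Y) != (y \in Y))) ->
  edge_cut e X = edge_cut e Y.
Proof.
move=> XY; apply/setP => f; apply/idP/idP => /mem_edge_cut[x [y [exy -> xyX]]].
  by rewrite edge_cut_edge // -XY.
by rewrite edge_cut_edge // XY.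
Qed.

Lemma edge_cutC (X : {set T}) : edge_cut e (~: X) = edge_cut e X.
Proof. by apply: eq_edge_cut => x y _; rewrite !inE; case: (x \in X); case: (y \in X). Qed.

Lemma connected_in_cut (A X : {set T}) : connected_in A ->
  {subset edge_cut e X <= edge_cut e A} -> {in A &, forall a b, (a \in X) = (b \in X)}.
Proof.
move=> cA XA a b aA bA; case/connectP: (cA a b aA bA) => s.
elim: s a aA => [|c s IH] a aA /=; first by move=> _ ->.
case/andP=> /and3P[eac _ cA'] Ps Eb; rewrite -(IH c cA' Ps Eb).
have nA : [set a; c] \notin edge_cut e A by rewrite edge_cut_edge // aA cA'.
by apply/eqP; apply: contraNT nA => ac; apply: XA; rewrite edge_cut_edge.
Qed.

Lemma path_avoiding_cut (A : {set T}) x s :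
  path e x s -> ~~ meets (edge_cut e A) (x :: s) -> {in s, forall z, (z \in A) = (x \in A)}.
Proof.
elim: s x => //= y s IH x /andP[exy Ps]; rewrite /meets /= negb_or => /andP[nxy ns].
have yx : (y \in A) = (x \in A) by apply/eqP; move: nxy; rewrite edge_cut_edge // negbK eq_sym.
by move=> z; rewrite inE => /orP[/eqP-> //|zs]; rewrite -yx; apply: IH.
Qed.

Hypothesis conn : forall x y, connect e x y.

Definition connected_bipartition (A : {set T}) : Prop :=
  [/\ A != set0, ~: A != set0, connected_in A & connected_in (~: A)].

Lemma edge_cut_bond (A : {set T}) : connected_bipartition A -> is_bond e (edge_cut e A).
Proof.
case=> /set0Pn[a aA] /set0Pn[b]; rewrite inE => bA cA cB; split; first by exists A.
split.
  have [x [y [xA yA exy]]] := connect_cross (conn a b) aA bA.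
  by apply/set0Pn; exists [set x; y]; rewrite edge_cut_edge // xA (negPf yA).
move=> _ [X ->] nX /subsetP XA.
have sA := connected_in_cut cA XA.
have XB : {subset edge_cut e X <= edge_cut e (~: A)} by rewrite edge_cutC.
have sB := connected_in_cut cB XB.
have side x : (x \in X) = if x \in A then a \in X else b \in X.
  by case: ifPn => xA; [apply: sA | apply: sB; rewrite ?inE].
case: (eqVneq (a \in X) (b \in X)) => ab.
  by case/set0Pn: nX => f /mem_edge_cut[x [y [_ _]]]; rewrite (side x) (side y) ab !if_same eqxx.
apply: eq_edge_cut => x y _; rewrite (side x) (side y).
by move: ab; case: (a \in X); case: (b \in X); case: (x \in A); case: (y \in A).
Qed.

Hypothesis conn2 : forall v, connected_in [set~ v].

Section Peel.
Variables (A : {set T}) (r : T).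
Hypotheses (cA : connected_in A) (rA : r \in A).

Definition unreached (v : T) : {set T} :=
  [set z in A :\ v | ~~ connect (induced (A :\ v)) r z].

Lemma unreached_proper u w : u \in A -> w \in unreached u ->
  unreached w \proper unreached u.
Proof.
move=> uA wU; move: (wU); rewrite inE => /andP[wAu nrw].
have /andP[wu wA] : (w != u) && (w \in A) by rewrite -in_setD1.
have rw : r != w by apply: contraNneq nrw => <-; apply: connect0.
have r_u : connect (induced (A :\ w)) r u.
  by case: (connect_induced_avoid rw wu (cA rA uA)) => // ruw; rewrite ruw in nrw.
apply/properP; split; last by exists w; rewrite // !inE eqxx.
apply/subsetP => z; rewrite !inE => /andP[/andP[zw zA] nrz].
have zu : z != u by apply: contraNneq nrz => ->.
rewrite zu zA /=; apply/negP => r_z; rewrite eq_sym in zw.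
case: (connect_induced_avoid rw zw r_z) => [r_zw|r_wz].
  move/negP: nrz; apply; apply: connect_induced_mono r_zw.
  by apply/subsetP => v; rewrite !inE => /and3P[-> _ ->].
move/negP: nrw; apply; apply: connect_induced_mono r_wz.
by apply/subsetP => v; rewrite !inE => /and3P[_ -> ->].
Qed.

Lemma unreached_exit u b : u \in A -> b \notin A -> unreached u != set0 ->
  exists2 x, x \in unreached u & exists2 y, y \notin A & e x y.
Proof.
move=> uA bA /set0Pn[z0 z0U].
have z0S : z0 \in [set~ u] by move: z0U; rewrite !inE => /andP[/andP[-> _] _].
have bS : b \in [set~ u] by rewrite in_setC1; apply: contraNneq bA => ->.
have bU : b \notin unreached u by rewrite !inE (negPf bA) andbF.
have [x [y [xU yU _ yS exy]]] := induced_cross (conn2 z0S bS) z0U bU.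
move: (xU); rewrite inE => /andP[xAu nrx].
exists x => //; exists y => //; apply: contra nrx => yA.
have yAu : y \in A :\ u by rewrite !inE -in_setC1 yS yA.
have : connect (induced (A :\ u)) r y by move: yU; rewrite inE yAu negbK.
by move/connect_trans; apply; apply: connect1; rewrite inducedE esym exy yAu xAu.
Qed.

End Peel.

(* Removing a vertex with a neighbour outside [A] and with the smallest [unreached] set
   keeps [A] connected: otherwise a vertex cut off from [r] yields one with a smaller set. *)
Lemma peel_vertex (A : {set T}) r b : connected_in A -> r \in A -> b \notin A ->
  exists u, [/\ u \in A, exists2 w, w \notin A & e u w & connected_in (A :\ u)].
Proof.
move=> cA rA bA; set N := [set v in A | [exists w, (w \notin A) && e v w]].
have [v0 v0N] : exists v0, v0 \in N.
  have [v [w [vA wA evw]]] := connect_cross (conn r b) rA bA.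
  by exists v; rewrite inE vA; apply/existsP; exists w; rewrite wA evw.
case: (@arg_minnP _ v0 (fun v => v \in N) (fun v => #|unreached A r v|) v0N) => u uN min_u.
move: uN; rewrite inE => /andP[uA /existsP[w /andP[wA euw]]].
exists u; split=> //; first by exists w.
suff U0 : unreached A r u = set0.
  have r_all z : z \in A :\ u -> connect (induced (A :\ u)) r z.
    move=> zAu; have : z \notin unreached A r u by rewrite U0 inE.
    by rewrite inE zAu negbK.
  move=> x y xAu yAu; apply: connect_trans (r_all y yAu).
  by rewrite (sym_connect_sym (induced_sym _)); apply: r_all.
apply/eqP; apply: contraT => /(unreached_exit uA bA)[x xU [y yA exy]].
have xA : x \in A by move: xU; rewrite !inE => /andP[/andP[_ ->]].
have xN : x \in N by rewrite inE xA; apply/existsP; exists y; rewrite yA exy.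
have := min_u x xN; rewrite leqNgt => /negP[]; apply: proper_card.
exact: unreached_proper.
Qed.

Section LongPaths.
Variable p : nat.
Hypothesis longest : forall s, is_gpath e s -> plen s <= p.

Lemma walk_uniq_size s : walk e s -> uniq s -> size s <= p.+1.
Proof.
case: s => // x s Ws Us; have := longest (s := x :: s).
by rewrite gpathE Ws Us /plen /=; apply.
Qed.

(* [path_bound s U] records [size s <= p.+1] for a sequence [s] glued from pieces of the
   walks in the context, all of whose vertices occur in the duplicate-free list of [U]. *)
Ltac path_bound s U :=
  have: size s <= p.+1;
    [ apply: walk_uniq_size; [walk_auto esym | apply: (uniq_count_le U); count_dominated]
    | repeat (first [rewrite size_cat | rewrite size_rev | rewrite size_rcons | progress simpl]) ].

(* Each connector, with a suitable half of [q] and of [r] on either side, is part of a path;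
   the halves can be chosen so that the two paths cover [q] and [r] and overlap. *)
Lemma two_connectors q r x1 k1 y1 x2 k2 y2 :
  walk e q -> walk e r ->
  walk e (x1 :: rcons k1 y1) -> uniq (k1 ++ q ++ r) ->
  walk e (x2 :: rcons k2 y2) -> uniq (k2 ++ q ++ r) ->
  x1 \in q -> x2 \in q -> y1 \in r -> y2 \in r -> y1 != y2 ->
  size q + size r < 2 * p.
Proof.
move=> Wq Wr W1 U1 W2 U2 x1q x2q y1r y2r y12.
wlog [n1 [n2 [n3 Er]]] : x1 k1 y1 x2 k2 y2 W1 U1 W2 U2 x1q x2q y1r y2r y12 /
    exists n1 n2 n3, r = n1 ++ y1 :: n2 ++ y2 :: n3.
  move=> wlog_r; have [n1 [n2 [n3 [Er|Er]]]] := split_mem2 y1r y2r y12.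
    by apply: (wlog_r x1 k1 y1 x2 k2 y2) => //; exists n1, n2, n3.
  by apply: (wlog_r x2 k2 y2 x1 k1 y1); rewrite // 1?eq_sym //; exists n1, n2, n3.
subst r; case: (eqVneq x1 x2) => [Ex|x12].
  subst x2; have [m1 [m3 Eq]] := split_mem x1q; subst q.
  path_bound (m1 ++ x1 :: k2 ++ y2 :: rev n2 ++ y1 :: rev n1) U2.
  path_bound (rev m3 ++ x1 :: k1 ++ y1 :: n2 ++ y2 :: n3) U1.
  size_lia.
have [m1 [m2 [m3 [Eq|Eq]]]] := split_mem2 x1q x2q x12; subst q.
  path_bound (m1 ++ x1 :: m2 ++ x2 :: k2 ++ y2 :: rev n2 ++ y1 :: rev n1) U2.
  path_bound (rev m3 ++ x2 :: rev m2 ++ x1 :: k1 ++ y1 :: n2 ++ y2 :: n3) U1.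
  size_lia.
path_bound (rev m3 ++ x1 :: rev m2 ++ x2 :: k2 ++ y2 :: rev n2 ++ y1 :: rev n1) U2.
path_bound (m1 ++ x2 :: m2 ++ x1 :: k1 ++ y1 :: n2 ++ y2 :: n3) U1.
size_lia.
Qed.

(* Either [r] also ends at [u], and then [q] and [r] concatenate into one path, or the two
   paths that use the connector and pass through [u] are together too long. *)
Lemma crossing_at_end u q r1 r2 x k y :
  walk e (u :: q) -> walk e (r1 ++ u :: r2) -> uniq (u :: q ++ r1 ++ r2) ->
  p.-1 <= size q -> p.-1 <= size r1 + size r2 -> 2 < p ->
  x \in q -> y \in r1 ++ r2 -> walk e (x :: rcons k y) -> uniq (k ++ u :: q ++ r1 ++ r2) ->
  False.
Proof.
move=> Wq Wr U lq lr p3 xq yr Wk Uk.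
wlog yr2 : r1 r2 Wr U lr yr Uk / y \in r2.
  move=> wlog_r; move: (yr); rewrite mem_cat => /orP[yr1|yr2]; last exact: (wlog_r r1 r2).
  apply: (wlog_r (rev r2) (rev r1)); rewrite ?size_rev ?mem_cat ?mem_rev ?yr1 ?orbT 1?addnC //.
  - exact: walk_rev_around.
  - by apply: (uniq_count_le U); count_dominated.
  - by apply: (uniq_count_le Uk); count_dominated.
have [q1 [q2 Eq]] := split_mem xq; have [r21 [r22 Er2]] := split_mem yr2; subst q r2.
case: (eqVneq r1 [::]) => [r10|r1_ne].
  subst r1; path_bound (rev q2 ++ x :: rev q1 ++ u :: r21 ++ y :: r22) U.
  size_lia.
have : 0 < size r1 by rewrite lt0n size_eq0.
path_bound (rev q2 ++ x :: k ++ y :: rev r21 ++ u :: rev r1) Uk.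
path_bound (r1 ++ u :: q1 ++ x :: k ++ y :: r22) Uk.
size_lia.
Qed.

(* The two paths through [u] and the [q1]-[q2] connector [t] force [t] to be an edge;
   with that edge, the [q]-[r] connector yields two more paths that are too long. *)
Lemma crossing_inside u q1 q2 r1 r2 x k y x1 t x2 :
  walk e (q1 ++ u :: q2) -> walk e (r1 ++ u :: r2) -> uniq (q1 ++ u :: q2 ++ r1 ++ r2) ->
  p.-1 <= size q1 + size q2 -> p.-1 <= size r1 + size r2 ->
  x \in q1 ++ q2 -> y \in r1 ++ r2 -> walk e (x :: rcons k y) ->
  uniq (k ++ q1 ++ u :: q2 ++ r1 ++ r2) ->
  x1 \in q1 -> x2 \in q2 -> walk e (x1 :: rcons t x2) ->
  uniq (t ++ q1 ++ u :: q2 ++ r1 ++ r2) -> False.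
Proof.
move=> Wq Wr U lq lr xq yr Wk Uk x1q1 x2q2 Wt Ut.
wlog xq2 : q1 q2 x1 t x2 Wq U lq xq Uk x1q1 x2q2 Wt Ut / x \in q2.
  move=> wlog_q; move: (xq); rewrite mem_cat => /orP[xq1|xq2]; last exact: (wlog_q q1 q2 x1 t x2).
  apply: (wlog_q (rev q2) (rev q1) x2 (rev t) x1);
    rewrite ?size_rev ?mem_cat ?mem_rev ?xq1 ?orbT 1?addnC //.
  - exact: walk_rev_around.
  - by apply: (uniq_count_le U); count_dominated.
  - by apply: (uniq_count_le Uk); count_dominated.
  - by rewrite walk_cons_rcons_rev.
  - by apply: (uniq_count_le Ut); count_dominated.
wlog yr2 : r1 r2 Wr U lr yr Uk Ut / y \in r2.
  move=> wlog_r; move: (yr); rewrite mem_cat => /orP[yr1|yr2]; last exact: (wlog_r r1 r2).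
  apply: (wlog_r (rev r2) (rev r1)); rewrite ?size_rev ?mem_cat ?mem_rev ?yr1 ?orbT 1?addnC //.
  - exact: walk_rev_around.
  - by apply: (uniq_count_le U); count_dominated.
  - by apply: (uniq_count_le Uk); count_dominated.
  - by apply: (uniq_count_le Ut); count_dominated.
have [q11 [q12 Eq1]] := split_mem x1q1; have [r21 [r22 Er2]] := split_mem yr2; subst q1 r2.
have t0 : t = [::].
  have [q21 [q22 Eq2]] := split_mem x2q2; subst q2.
  path_bound (q11 ++ x1 :: t ++ x2 :: rev q21 ++ u :: r21 ++ y :: r22) Ut.
  path_bound (rev q22 ++ x2 :: rev t ++ x1 :: q12 ++ u :: rev r1) Ut.
  by move=> *; apply: size0nil; size_lia.
subst t; have e12 : e x1 x2 by move: Wt; rewrite /= andbT.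
case: (eqVneq x x2) => [Ex|xx2].
  subst x; have [q21 [q22 Eq2]] := split_mem x2q2; subst q2.
  path_bound (r1 ++ u :: rev q12 ++ x1 :: x2 :: k ++ y :: r22) Uk.
  path_bound (rev q22 ++ x2 :: k ++ y :: rev r21 ++ u :: rev r1) Uk.
  path_bound (q11 ++ x1 :: x2 :: rev q21 ++ u :: r21 ++ y :: r22) Ut.
  size_lia.
rewrite eq_sym in xx2; have [m1 [m2 [m3 [Eq2|Eq2]]]] := split_mem2 x2q2 xq2 xx2; subst q2.
  path_bound (r1 ++ u :: rev q12 ++ x1 :: x2 :: m2 ++ x :: k ++ y :: r22) Uk.
  path_bound (rev m3 ++ x :: k ++ y :: rev r21 ++ u :: rev r1) Uk.
  path_bound (q11 ++ x1 :: x2 :: rev m1 ++ u :: r21 ++ y :: r22) Ut.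
  size_lia.
path_bound (r1 ++ u :: rev q12 ++ x1 :: x2 :: rev m2 ++ x :: k ++ y :: r22) Uk.
path_bound (rev m3 ++ x2 :: rev m2 ++ x :: k ++ y :: rev r21 ++ u :: rev r1) Uk.
path_bound (q11 ++ x1 :: x2 :: rev m2 ++ x :: rev m1 ++ u :: r21 ++ y :: r22) Ut.
size_lia.
Qed.

Lemma crossing_paths u q1 q2 r1 r2 x k y :
  walk e (q1 ++ u :: q2) -> walk e (r1 ++ u :: r2) -> uniq (q1 ++ u :: q2 ++ r1 ++ r2) ->
  p.-1 <= size q1 + size q2 -> p.-1 <= size r1 + size r2 -> 2 < p ->
  x \in q1 ++ q2 -> y \in r1 ++ r2 -> walk e (x :: rcons k y) ->
  uniq (k ++ q1 ++ u :: q2 ++ r1 ++ r2) ->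
  (q1 != [::] -> q2 != [::] -> exists x1 t x2, [/\ x1 \in q1, x2 \in q2,
     walk e (x1 :: rcons t x2) & uniq (t ++ q1 ++ u :: q2 ++ r1 ++ r2)]) ->
  False.
Proof.
move=> Wq Wr U lq lr p3 xq yr Wk Uk q1_q2.
case: (eqVneq q1 [::]) => [q10|q1n].
  by subst q1; apply: (crossing_at_end Wq Wr U lq lr p3 xq yr Wk Uk).
case: (eqVneq q2 [::]) => [q20|q2n].
  subst q2; apply: (crossing_at_end (q := rev q1) _ Wr _ _ lr p3 _ yr Wk).
  - by rewrite walk_cons_rev // -cats1.
  - by apply: (uniq_count_le U); count_dominated.
  - by rewrite size_rev; move: lq; rewrite addn0.
  - by rewrite mem_rev; move: xq; rewrite cats0.
  - by apply: (uniq_count_le Uk); count_dominated.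
have [x1 [t [x2 [x1q x2q Wt Ut]]]] := q1_q2 q1n q2n.
exact: (crossing_inside Wq Wr U lq lr xq yr Wk Uk x1q x2q Wt Ut).
Qed.

Definition long_in (S : {set T}) (s : seq T) : Prop :=
  [/\ is_gpath e s, {subset s <= S} & p.-1 <= plen s].

Definition short_in (S : {set T}) : Prop := forall s, ~ long_in S s.

Lemma long_in_card S s : long_in S s -> p.-1 < #|S|.
Proof.
case; rewrite gpathE => /and3P[ns _ Us] sS ls.
have : size s <= #|S| by rewrite -(card_uniqP Us); apply: subset_leq_card; apply/subsetP.
have : 0 < size s by rewrite lt0n size_eq0.
by move: ls; rewrite /plen; lia.
Qed.

Lemma long_in_split S s u : long_in S s -> u \in s ->
  exists s1 s2, [/\ s = s1 ++ u :: s2, walk e (s1 ++ u :: s2), uniq (s1 ++ u :: s2),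
                    p.-1 <= size s1 + size s2 & {subset s1 ++ s2 <= S :\ u}].
Proof.
case; rewrite gpathE => /and3P[_ Ws Us] sS ls us; have [s1 [s2 Es]] := split_mem us.
exists s1, s2; rewrite -Es; split=> //.
  by move: ls; rewrite /plen Es size_cat /= addnS.
move=> v; rewrite mem_cat => vs12.
have vs : v \in s by rewrite Es mem_cat inE; case/orP: vs12 => ->; rewrite ?orbT.
rewrite !inE sS // andbT; apply: contraTneq vs12 => ->.
by move: Us; rewrite Es -cat1s uniq_catCA cat1s /= mem_cat => /andP[].
Qed.

Lemma long_path_meets_cut (A : {set T}) s : short_in A -> short_in (~: A) ->
  is_gpath e s -> p.-1 <= plen s -> meets (edge_cut e A) s.
Proof.
move=> sA sB Gs ls; apply/negPn/negP => nm.
case: s Gs ls nm => // x s Gs ls nm; have /andP[Ps _] := Gs.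
have side := path_avoiding_cut Ps nm.
case: (boolP (x \in A)) => xA; [apply: (sA (x :: s)) | apply: (sB (x :: s))]; split=> // z.
  by rewrite inE => /orP[/eqP-> //|/side]; rewrite xA.
by rewrite !inE => /orP[/eqP-> //|/side ->].
Qed.

Section Across.
Variables (A : {set T}) (u : T).
Hypotheses (uA : u \in A) (cA : connected_in A) (cAu : connected_in (A :\ u)).
Hypotheses (shortB : short_in (~: A)) (p3 : 2 < p).

Lemma long_path_through_u R : long_in (u |: ~: A) R -> u \in R.
Proof.
case=> GR RS lR; apply/negPn/negP => uR; apply: (shortB (s := R)); split=> // z zR.
by move: (RS z zR); rewrite !inE => /orP[/eqP zu|//]; rewrite -zu zR in uR.
Qed.

Lemma long_paths_meet_at_u Q R : long_in A Q -> long_in (u |: ~: A) R -> u \in Q -> False.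
Proof.
move=> lQ lR uQ.
have [q1 [q2 [_ Wq Uq lq qA]]] := long_in_split lQ uQ.
have [r1 [r2 [_ Wr Ur lr rB]]] := long_in_split lR (long_path_through_u lR).
have qr v : v \in q1 ++ q2 -> v \in r1 ++ r2 -> False.
  by move=> /qA; rewrite !inE => /andP[vu vA] /rB; rewrite !inE vA (negPf vu).
have U := uniq_glue Uq Ur qr.
have [x0 x0q] : exists x0, x0 \in q1 ++ q2.
  by apply: mem_nonempty; rewrite -size_eq0 size_cat; size_lia.
have [y0 y0r] : exists y0, y0 \in r1 ++ r2.
  by apply: mem_nonempty; rewrite -size_eq0 size_cat; size_lia.
have x0S : x0 \in [set~ u] by move: (qA x0 x0q); rewrite !inE => /andP[].
have y0S : y0 \in [set~ u] by move: (rB y0 y0r); rewrite !inE => /andP[].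
have qrU : {in [set~ u], forall v, v \in q1 ++ u :: q2 ++ r1 ++ r2 ->
                                    (v \in q1 ++ q2) || (v \in r1 ++ r2)}.
  by move=> v; rewrite in_setC1 => vu; rewrite !(mem_cat, inE) (negPf vu) /= -!orbA.
have q_r v : v \in q1 ++ q2 -> v \notin r1 ++ r2 by move=> vq; apply/negP; apply: qr.
have [x [k [y [xq yr Wk Uk]]]] := induced_connector (X := fun v => v \in q1 ++ q2)
  (Z := fun v => v \in r1 ++ r2) (conn2 x0S y0S) x0q y0r q_r qrU U.
apply: (crossing_paths Wq Wr U lq lr p3 xq yr Wk Uk) => q1n q2n.
have [a0 a0q] := mem_nonempty q1n; have [b0 b0q] := mem_nonempty q2n.
have a0A : a0 \in A :\ u by apply: qA; rewrite mem_cat a0q.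
have b0A : b0 \in A :\ u by apply: qA; rewrite mem_cat b0q orbT.
have q12 v : v \in q1 -> ~~ (v \in q2).
  move=> vq1; apply/negP => vq2; move: Uq; rewrite cat_uniq => /and3P[_ /hasPn/(_ v) + _].
  by rewrite inE vq2 orbT vq1 => /(_ isT).
have qU : {in A :\ u, forall v, v \in q1 ++ u :: q2 ++ r1 ++ r2 -> (v \in q1) || (v \in q2)}.
  move=> v; rewrite !inE => /andP[vu vA]; rewrite !(mem_cat, inE) (negPf vu) /=.
  case/or4P=> [->|->|vr|vr]; rewrite ?orbT //;
    by move: (rB v); rewrite mem_cat vr ?orbT !inE vA (negPf vu) => /(_ isT).
exact: (induced_connector (X := fun v => v \in q1) (Z := fun v => v \in q2)
  (cAu a0A b0A) a0q b0q q12 qU U).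
Qed.

Lemma long_paths_apart Q R : long_in A Q -> long_in (u |: ~: A) R -> u \notin Q -> False.
Proof.
move=> lQ lR uQ; have uR := long_path_through_u lR.
have [r1 [r2 [ER _ _ lr rB]]] := long_in_split lR uR.
case: lQ lR => GQ QA lQ [GR RS lR].
move: GQ GR; rewrite !gpathE => /and3P[nQ WQ UQ] /and3P[_ WR UR].
have RA v : v \in R -> v \in A -> v == u by move=> /RS; rewrite !inE => /orP[|/negPf->].
have U : uniq (Q ++ R).
  rewrite cat_uniq UQ UR andbT /=; apply/hasPn => v vR; apply/negP => vQ.
  by move: uQ; rewrite -(eqP (RA v vR (QA v vQ))) vQ.
have [x0 x0Q] := mem_nonempty nQ.
have [y0 y0r] : exists y0, y0 \in r1 ++ r2.
  by apply: mem_nonempty; rewrite -size_eq0 size_cat; size_lia.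
have y0u : y0 != u by move: (rB y0 y0r); rewrite !inE => /andP[].
have y0R : y0 \in R by move: y0r; rewrite ER !mem_cat inE => /orP[->|->]; rewrite ?orbT.
have x0A := QA x0 x0Q.
have Qu : {in A, forall v, v \in Q ++ R -> (v \in Q) || (v == u)}.
  by move=> v vA; rewrite mem_cat => /orP[->|/RA/(_ vA)->]; rewrite ?orbT.
have Qnu v : v \in Q -> v != u by move=> vQ; apply: contraNneq uQ => <-.
have [x1 [k1 [y1 [x1Q /eqP y1u W1 U1]]]] := induced_connector (X := fun v => v \in Q)
  (Z := fun v => v == u) (cA x0A uA) x0Q (eqxx u) Qnu Qu U.
have QR v : v \in Q -> ~~ ((v \in R) && (v != u)).
  by move=> vQ; apply/negP => /andP[vR]; rewrite (RA v vR (QA v vQ)).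
have QRu : {in [set~ u], forall v, v \in Q ++ R -> (v \in Q) || ((v \in R) && (v != u))}.
  by move=> v; rewrite in_setC1 => vu; rewrite mem_cat vu andbT.
have x0S : x0 \in [set~ u] by rewrite in_setC1 Qnu.
have y0S : y0 \in [set~ u] by rewrite in_setC1.
have y0Z : (y0 \in R) && (y0 != u) by rewrite y0R y0u.
have [x2 [k2 [y2 [x2Q /andP[y2R y2u] W2 U2]]]] := induced_connector (X := fun v => v \in Q)
  (Z := fun v => (v \in R) && (v != u)) (conn2 x0S y0S) x0Q y0Z QR QRu U.
subst y1; have := two_connectors WQ WR W1 U1 W2 U2 x1Q x2Q uR y2R.
by rewrite eq_sym => /(_ y2u); move: lQ lR; rewrite /plen; size_lia.
Qed.

Lemma no_long_path_across Q R : long_in A Q -> long_in (u |: ~: A) R -> False.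
Proof.
move=> lQ lR; case: (boolP (u \in Q)) => uQ; first exact: long_paths_meet_at_u lQ lR uQ.
exact: long_paths_apart lQ lR uQ.
Qed.

End Across.

Lemma shrink_to_short_sides (A : {set T}) : 2 < p ->
  connected_bipartition A -> short_in (~: A) ->
  exists A', [/\ connected_bipartition A', short_in A' & short_in (~: A')].
Proof.
move=> p3; have [n] := ubnP #|A|; elim: n A => // n IH A szA [nA nB cA cB] sB.
case: (classic (short_in A)) => [sA|/not_all_not_ex[Q lQ]]; first by exists A.
have A1 : 1 < #|A| by have := long_in_card lQ; lia.
have /set0Pn[a aA] := nA; have /set0Pn[b] := nB; rewrite inE => bA.
have [u [uA [w wA euw] cAu]] := peel_vertex cA aA bA.
have EB : ~: (A :\ u) = u |: ~: A by apply/setP => z; rewrite !inE negb_and negbK.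
have szAu := cardsD1 u A; rewrite uA in szAu.
apply: (IH (A :\ u)); first by move: szA; rewrite szAu; lia.
  split=> //; first by rewrite -card_gt0; lia.
    by apply/set0Pn; exists u; rewrite !inE eqxx.
  by rewrite EB; apply: connected_in_setU1 cB _ euw; rewrite inE.
by rewrite EB => R lR; apply: (no_long_path_across uA cA cAu sB p3 lQ lR).
Qed.

Lemma short_separation : 1 < #|T| -> 2 < p ->
  exists A, [/\ connected_bipartition A, short_in A & short_in (~: A)].
Proof.
move=> T2 p3; have [t _] : exists t : T, t \notin [::] by apply: exists_notin; apply: ltnW.
have [a] : exists a, a \notin [:: t] by apply: exists_notin.
rewrite inE => ta; apply: (shrink_to_short_sides (A := [set~ t]) p3); [split|]; rewrite ?setCK.
- by apply/set0Pn; exists a; rewrite in_setC1.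
- by apply/set0Pn; exists t; rewrite in_set1.
- exact: conn2.
- by move=> x y /set1P-> /set1P->; apply: connect0.
- by move=> s /long_in_card; rewrite cards1; lia.
Qed.

Lemma longest_ge3 : 3 < #|T| -> 2 < p.
Proof.
move=> T4; have [w0 _] : exists w : T, w \notin [::] by apply: exists_notin (leq_ltn_trans _ T4).
have [w1] : exists w, w \notin [:: w0] by apply: exists_notin (leq_ltn_trans _ T4).
rewrite inE => w1w0; have w1X : w1 \notin [set w0] by rewrite in_set1.
have [x [y [/set1P-> yX ew0y]]] := connect_cross (conn w0 w1) (set11 w0) w1X.
rewrite in_set1 in yX.
have [w2] : exists w, w \notin [:: w0; y] by apply: exists_notin (leq_ltn_trans _ T4).
rewrite !inE negb_or => /andP[w2w0 w2y].
have yS : y \in [set~ w0] by rewrite in_setC1.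
have w2S : w2 \in [set~ w0] by rewrite in_setC1.
have w2X : w2 \notin [set y] by rewrite in_set1.
have [y' [z [/set1P-> zy _ zS eyz]]] := induced_cross (conn2 yS w2S) (set11 y) w2X.
rewrite in_set1 in zy; rewrite in_setC1 in zS.
have [w3] : exists w, w \notin [:: w0; y; z] by apply: exists_notin (leq_ltn_trans _ T4).
rewrite !inE !negb_or => /and3P[w3w0 w3y w3z].
have w0S : w0 \in [set~ y] by rewrite in_setC1 eq_sym.
have w3S : w3 \in [set~ y] by rewrite in_setC1.
have w3X : w3 \notin [set w0; z] by rewrite !inE negb_or w3w0 w3z.
have [a [b [aX bX _ bS eab]]] := induced_cross (conn2 w0S w3S) (set21 w0 z) w3X.
move: bX bS; rewrite !inE negb_or => /andP[bw0 bz] b_y.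
case/set2P: aX => Ea; subst a.
  have := longest (s := [:: b; w0; y; z]); rewrite /plen /=; apply.
  rewrite /= !inE !negb_or esym eab ew0y eyz bw0 b_y bz (eq_sym w0 y) yX.
  by rewrite (eq_sym w0 z) zS (eq_sym y z) zy.
have := longest (s := [:: w0; y; z; b]); rewrite /plen /=; apply.
rewrite /= !inE !negb_or ew0y eyz eab (eq_sym w0 y) yX (eq_sym w0 z) zS (eq_sym w0 b) bw0.
by rewrite (eq_sym y z) zy (eq_sym y b) b_y (eq_sym z b) bz.
Qed.

Lemma bond_meeting_long_paths : 3 < #|T| ->
  exists F, is_bond e F /\ forall s, is_gpath e s -> p.-1 <= plen s -> meets F s.
Proof.
move=> T4; have p3 := longest_ge3 T4.
have [A [bipA sA sB]] := short_separation (ltnW (ltnW T4)) p3.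
exists (edge_cut e A); split; first exact: edge_cut_bond.
by move=> s; apply: long_path_meets_cut.
Qed.

End LongPaths.

End Graph.

Theorem corollary1 (T : finType) (e : rel T) (p : nat) :
  symmetric e -> irreflexive e ->
  two_connected e -> 4 <= #|T| ->
  longest_path_length e p ->
  exists F : {set {set T}}, is_bond e F /\
    forall s : seq T, is_gpath e s -> p.-1 <= plen s -> meets F s.
Proof.
move=> esym eirr [_ [conn del_conn]] T4 [_ longest].
have conn2 v : connected_in e [set~ v].
  move=> x y xv yv; have E : del_rel e v =2 induced e [set~ v].
    by move=> a b; rewrite inducedE !in_setC1.
  by rewrite -(eq_connect E); apply: del_conn; rewrite -in_setC1.
exact: (bond_meeting_long_paths esym eirr conn conn2 longest T4).
Qed.
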